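(* Let $C\in\mathbb D$ with basis $c_i=\delta_{\lambda_i}\circ(\partial_z+\gamma_i)$, $i=1,\dots,n$. Then the $N=rn$ functions $c_i(\hat f_j)$, $1\le i\le n$, $1\le j\le r$, are linearly independent.
   Context: Fix an integer $r>1$ and constants $a_1,\dots,a_{r-2}\in\mathbb C$, and let $L_0=\partial^r-a_{r-2}\partial^{r-2}-\cdots-a_1\partial-x$, where $\partial=d/dx$. Fix a basis $f_1,\dots,f_r$ of $\ker L_0$. For a function $f$ of one variable write $\hat f(x,z)=f(x+z)$. $\mathcal S$ denotes the space of finitely supported distributions in the $z$-plane: finite linear combinations of $\delta_\lambda\circ\partial_z^j$ ($\lambda\in\mathbb C$, $j\ge0$), where $\delta_\lambda$ evaluates its argument at $z=\lambda$; applied to a function $\psi(x,z)$ such a distribution acts in the $z$ variable and yields a function of $x$. $\mathbb D$ is the set of finite-dimensional subspaces $C\subset\mathcal S$ having a basis $c_i=\delta_{\lambda_i}\circ(\partial_z+\gamma_i)$, $i=1,\dots,n$ ($n\ge1$), with $\lambda_1,\dots,\lambda_n$ pairwise distinct and $\gamma_i\in\mathbb C$. *)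

From Stdlib Require Import Reals.
From Coquelicot Require Import Coquelicot.

Open Scope C_scope.

Fixpoint csum (n : nat) (u : nat -> C) : C :=
  match n with
  | O => 0
  | S m => csum m u + u m
  end.

Definition cderiv (f g : C -> C) : Prop :=
  forall x : C, @is_derive C_AbsRing C_NormedModule f x (g x).

(* f lies in ker L0, where
   L0 = d^r - a_{r-2} d^{r-2} - ... - a_1 d - x :
   f has successive complex derivatives D 0 = f, D 1, ..., D r and
   D r x = a_1 D 1 x + ... + a_{r-2} D (r-2) x + x * f x  for all x. *)
Definition in_ker_L0 (r : nat) (a : nat -> C) (f : C -> C) : Prop :=
  exists D : nat -> C -> C,
    D O = f /\
    (forall k, (k < r)%nat -> cderiv (D k) (D (S k))) /\
    (forall x : C,
        D r x = csum (r - 2) (fun k => a (S k) * D (S k) x) + x * f x).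

Definition is_basis_ker_L0 (r : nat) (a : nat -> C) (f : nat -> C -> C) : Prop :=
  (forall j, (j < r)%nat -> in_ker_L0 r a (f j)) /\
  (forall c : nat -> C,
      (forall x, csum r (fun j => c j * f j x) = 0) ->
      forall j, (j < r)%nat -> c j = 0) /\
  (forall g, in_ker_L0 r a g ->
      exists c : nat -> C, forall x, g x = csum r (fun j => c j * f j x)).

(* c_i (\hat f)(x) for c_i = delta_lambda o (d_z + gamma), where df is the
   derivative of f: (d/dz f(x+z) + gamma f(x+z)) at z = lambda. *)
Definition apply_c (lambda gamma : C) (f df : C -> C) (x : C) : C :=
  df (x + lambda) + gamma * f (x + lambda).

(* Put u_i(x) = sum_j mu_ij f_j(x + lambda_i).  Since L0 f_j = 0, the translate u_i
   satisfies L0 u_i = lambda_i u_i, and since [d/dx, L0] = -1 also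
   L0 u_i' = lambda_i u_i' + u_i: on span(u_i, u_i') the operator L0 is a Jordan block
   with eigenvalue lambda_i.  Applying L0 to a relation sum_i (p_i u_i + q_i u_i') = 0
   gives another one, so the set of relations is stable under the direct sum T of
   these blocks acting on the coefficients.  Starting from (gamma_i, 1) and applying
   (T - lambda_i0) prod_{m <> i0} (T - lambda_m)^2, which kills every block but the
   i0-th, leaves c u_i0 = 0 with c <> 0; independence of the f_j then gives mu_i0j = 0. *)

From Stdlib Require Import Reals Lia IndefiniteDescription.
From Coquelicot Require Import Coquelicot.
Open Scope C_scope.

(* The generic rules for [id] and products produce derivatives in
   [AbsRing_NormedModule C_AbsRing], which is not convertible to [C_NormedModule]. *)
Lemma is_derive_C_NormedModule (f : C -> C) (x l : C) :
  @is_derive C_AbsRing (AbsRing_NormedModule C_AbsRing) f x l <->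
  @is_derive C_AbsRing C_NormedModule f x l.
Proof.
  split; intros [[Hplus Hscal [M [HM Hnorm]]] Hdiff];
    (split; [split; [exact Hplus | exact Hscal | exists M; auto] | exact Hdiff]).
Qed.

Lemma cderiv_ext (f g f' g' : C -> C) :
  (forall x, f x = g x) -> (forall x, f' x = g' x) -> cderiv f f' -> cderiv g g'.
Proof. intros Hf Hf' H x. rewrite <- Hf'. exact (is_derive_ext f g x _ Hf (H x)). Qed.

Lemma cderiv_const (c : C) : cderiv (fun _ => c) (fun _ => 0).
Proof. intros x. exact (is_derive_const c x). Qed.

Lemma cderiv_id : cderiv (fun x => x) (fun _ => 1).
Proof. intros x. apply is_derive_C_NormedModule, (is_derive_id x). Qed.

Lemma cderiv_plus (f g f' g' : C -> C) :
  cderiv f f' -> cderiv g g' -> cderiv (fun x => f x + g x) (fun x => f' x + g' x).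
Proof. intros Hf Hg x. exact (is_derive_plus f g x _ _ (Hf x) (Hg x)). Qed.

Lemma cderiv_mult (f g f' g' : C -> C) :
  cderiv f f' -> cderiv g g' ->
  cderiv (fun x => f x * g x) (fun x => f' x * g x + f x * g' x).
Proof.
  intros Hf Hg x. apply is_derive_C_NormedModule, (@is_derive_mult C_AbsRing).
  - apply is_derive_C_NormedModule, Hf.
  - apply is_derive_C_NormedModule, Hg.
  - exact Cmult_comm.
Qed.

Lemma cderiv_scal (c : C) (f f' : C -> C) :
  cderiv f f' -> cderiv (fun x => c * f x) (fun x => c * f' x).
Proof.
  intros H. refine (cderiv_ext _ _ _ _ _ _ (cderiv_mult _ _ _ _ (cderiv_const c) H)).
  - reflexivity.
  - intros x. ring.
Qed.

Lemma cderiv_shift (l : C) (f f' : C -> C) :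
  cderiv f f' -> cderiv (fun x => f (x + l)) (fun x => f' (x + l)).
Proof.
  intros H x.
  assert (Htr : cderiv (fun x => x + l) (fun _ => 1)).
  { refine (cderiv_ext _ _ _ _ _ _ (cderiv_plus _ _ _ _ cderiv_id (cderiv_const l)));
      intros; simpl; ring. }
  pose proof (is_derive_comp f (fun x => x + l) x _ _ (H (x + l))
                (proj2 (is_derive_C_NormedModule _ _ _) (Htr x))) as Hcomp.
  replace (f' (x + l)) with (scal (1 : C) (f' (x + l))); [exact Hcomp|].
  change (1 * f' (x + l) = f' (x + l)). ring.
Qed.

Lemma cderiv_unique (f f' g' : C -> C) : cderiv f f' -> cderiv f g' -> forall x, f' x = g' x.
Proof.
  intros H1 H2 x. rewrite <- (is_C_derive_unique _ _ _ (H1 x)).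
  exact (is_C_derive_unique _ _ _ (H2 x)).
Qed.

Lemma cderiv_eq0 (f f' : C -> C) : cderiv f f' -> (forall x, f x = 0) -> forall x, f' x = 0.
Proof.
  intros H Hf. apply (cderiv_unique f); [exact H|].
  exact (cderiv_ext _ _ _ _ (fun x => eq_sym (Hf x)) (fun _ => eq_refl) (cderiv_const 0)).
Qed.

Lemma cderiv_csum (m : nat) (u u' : nat -> C -> C) :
  (forall k, (k < m)%nat -> cderiv (u k) (u' k)) ->
  cderiv (fun x => csum m (fun k => u k x)) (fun x => csum m (fun k => u' k x)).
Proof.
  induction m as [|m IH]; simpl; intros H.
  - apply cderiv_const.
  - apply cderiv_plus; auto.
Qed.

Lemma csum_ext (m : nat) (u v : nat -> C) :
  (forall k, (k < m)%nat -> u k = v k) -> csum m u = csum m v.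
Proof. induction m; simpl; intros H; auto. rewrite IHm, H; auto. Qed.

Lemma csum_add (m : nat) (u v : nat -> C) :
  csum m (fun k => u k + v k) = csum m u + csum m v.
Proof. induction m; simpl; [ring|]. rewrite IHm; ring. Qed.

Lemma csum_sub (m : nat) (u v : nat -> C) :
  csum m (fun k => u k - v k) = csum m u - csum m v.
Proof. induction m; simpl; [ring|]. rewrite IHm; ring. Qed.

Lemma csum_scal (m : nat) (c : C) (u : nat -> C) :
  csum m (fun k => c * u k) = c * csum m u.
Proof. induction m; simpl; [ring|]. rewrite IHm; ring. Qed.

Lemma csum_swap (m p : nat) (u : nat -> nat -> C) :
  csum m (fun i => csum p (fun k => u i k)) = csum p (fun k => csum m (fun i => u i k)).
Proof.
  induction m as [|m IH]; simpl.
  - induction p as [|p IHp]; simpl; [reflexivity|]. rewrite <- IHp. ring.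
  - rewrite IH, <- csum_add. reflexivity.
Qed.

Lemma csum_eq0 (m : nat) (u : nat -> C) : (forall k, (k < m)%nat -> u k = 0) -> csum m u = 0.
Proof. induction m; simpl; intros H; auto. rewrite IHm, H; auto. ring. Qed.

Lemma csum_single (m k0 : nat) (u : nat -> C) :
  (k0 < m)%nat -> (forall k, (k < m)%nat -> k <> k0 -> u k = 0) -> csum m u = u k0.
Proof.
  induction m as [|m IH]; simpl; intros Hk0 H; [lia|].
  destruct (Nat.eq_dec m k0) as [<-|Hne].
  - rewrite csum_eq0; [ring|]. intros k Hk. apply H; lia.
  - rewrite (H m), IH by (auto; lia). ring.
Qed.

Definition is_jet (m : nat) (D : nat -> C -> C) : Prop :=
  forall k, (k < m)%nat -> cderiv (D k) (D (S k)).

Lemma jet_eq0 (m : nat) (D : nat -> C -> C) :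
  is_jet m D -> (forall x, D 0%nat x = 0) -> forall k, (k <= m)%nat -> forall x, D k x = 0.
Proof.
  intros HD H0 k. induction k as [|k IH]; intros Hk; [exact H0|].
  apply (cderiv_eq0 (D k)); [apply HD; lia | apply IH; lia].
Qed.

Definition L0_jet (r : nat) (a : nat -> C) (D : nat -> C -> C) (x : C) : C :=
  D r x - csum (r - 2) (fun k => a (S k) * D (S k) x) - x * D 0%nat x.

Lemma L0_jet_csum r a (m : nat) (F : nat -> nat -> C -> C) (x : C) :
  L0_jet r a (fun k y => csum m (fun j => F j k y)) x = csum m (fun j => L0_jet r a (F j) x).
Proof.
  unfold L0_jet. cbv beta. rewrite !csum_sub, csum_scal.
  rewrite (csum_ext (r - 2) _ (fun k => csum m (fun j => a (S k) * F j (S k) x)))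
    by (intros; symmetry; apply csum_scal).
  rewrite csum_swap. reflexivity.
Qed.

Lemma L0_jet_add r a (D D' : nat -> C -> C) (x : C) :
  L0_jet r a (fun k y => D k y + D' k y) x = L0_jet r a D x + L0_jet r a D' x.
Proof.
  unfold L0_jet.
  rewrite (csum_ext _ _ (fun k => a (S k) * D (S k) x + a (S k) * D' (S k) x))
    by (intros; ring).
  rewrite csum_add. ring.
Qed.

Lemma L0_jet_scal r a (c : C) (D : nat -> C -> C) (x : C) :
  L0_jet r a (fun k y => c * D k y) x = c * L0_jet r a D x.
Proof.
  unfold L0_jet.
  rewrite (csum_ext _ _ (fun k => c * (a (S k) * D (S k) x))) by (intros; ring).
  rewrite csum_scal. ring.
Qed.

Lemma L0_jet_translate r a (l : C) (D : nat -> C -> C) (x : C) :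
  L0_jet r a (fun k y => D k (y + l)) x = L0_jet r a D (x + l) + l * D 0%nat (x + l).
Proof. unfold L0_jet. ring. Qed.

(* The commutation relation [d/dx, L0] = -1. *)
Lemma cderiv_L0_jet r a (D : nat -> C -> C) :
  (0 < r)%nat -> is_jet (S r) D ->
  cderiv (L0_jet r a D) (fun x => L0_jet r a (fun k => D (S k)) x - D 0%nat x).
Proof.
  intros Hr HD. unfold L0_jet.
  refine (cderiv_ext _ _ _ _ _ _
    (cderiv_plus _ _ _ _ (HD r (Nat.lt_succ_diag_r r))
      (cderiv_scal (-1) _ _
        (cderiv_plus _ _ _ _
          (cderiv_csum (r - 2) (fun k y => a (S k) * D (S k) y)
                                (fun k y => a (S k) * D (S (S k)) y) _)
          (cderiv_mult _ _ _ _ cderiv_id (HD 0%nat ltac:(lia))))))).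
  - intros x. simpl. ring.
  - intros x. simpl. ring.
  - intros k Hk. apply cderiv_scal, HD. lia.
Qed.

Lemma ker_L0_jet r a (f : C -> C) :
  (0 < r)%nat -> in_ker_L0 r a f ->
  exists D, D 0%nat = f /\ is_jet (S r) D /\ forall x, L0_jet r a D x = 0.
Proof.
  intros Hr [D [<- [HD HDr]]].
  assert (Hdr : exists g, cderiv (D r) g).
  { eexists. refine (cderiv_ext _ _ _ _ (fun x => eq_sym (HDr x)) (fun _ => eq_refl)
      (cderiv_plus _ _ _ _
        (cderiv_csum (r - 2) (fun k y => a (S k) * D (S k) y) _ _)
        (cderiv_mult _ _ _ _ cderiv_id (HD 0%nat Hr)))).
    intros k Hk. apply cderiv_scal, HD. lia. }
  destruct Hdr as [g Hg].
  exists (fun k => if Nat.eqb k (S r) then g else D k). split; [|split].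
  - reflexivity.
  - intros k Hk. destruct (Nat.eq_dec k r) as [->|Hne].
    + rewrite Nat.eqb_refl, (proj2 (Nat.eqb_neq r (S r))) by lia. exact Hg.
    + rewrite !(proj2 (Nat.eqb_neq _ (S r))) by lia. apply HD. lia.
  - intros x. unfold L0_jet.
    rewrite (proj2 (Nat.eqb_neq r (S r))) by lia. simpl. rewrite HDr.
    rewrite (csum_ext _ (fun k => a (S k) * (if Nat.eqb k r then g else D (S k)) x)
                        (fun k => a (S k) * D (S k) x)).
    + ring.
    + intros k Hk. rewrite (proj2 (Nat.eqb_neq k r)) by lia. reflexivity.
Qed.

Lemma ker_L0_jet_family r a (f : nat -> C -> C) :
  (0 < r)%nat -> (forall j, (j < r)%nat -> in_ker_L0 r a (f j)) ->
  exists D : nat -> nat -> C -> C, forall j, (j < r)%nat ->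
    D j 0%nat = f j /\ is_jet (S r) (D j) /\ forall x, L0_jet r a (D j) x = 0.
Proof.
  intros Hr Hker.
  apply (functional_choice (fun j D => (j < r)%nat ->
    D 0%nat = f j /\ is_jet (S r) D /\ forall x, L0_jet r a D x = 0)).
  intros j. destruct (Nat.lt_ge_cases j r) as [Hj|Hj].
  - destruct (ker_L0_jet r a (f j) Hr (Hker j Hj)) as [D HD]. exists D. auto.
  - exists (fun _ _ => 0). intros. lia.
Qed.

Lemma is_jet_translate_comb (m p : nat) (c : nat -> C) (l : C) (D : nat -> nat -> C -> C) :
  (forall j, (j < p)%nat -> is_jet m (D j)) ->
  is_jet m (fun k x => csum p (fun j => c j * D j k (x + l))).
Proof.
  intros HD k Hk. apply (cderiv_csum p (fun j x => c j * D j k (x + l))).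
  intros j Hj. apply cderiv_scal, cderiv_shift, HD; auto.
Qed.

Lemma L0_jet_translate_comb r a (p : nat) (c : nat -> C) (l : C) (D : nat -> nat -> C -> C) :
  (forall j, (j < p)%nat -> forall x, L0_jet r a (D j) x = 0) ->
  forall x, L0_jet r a (fun k y => csum p (fun j => c j * D j k (y + l))) x =
            l * csum p (fun j => c j * D j 0%nat (x + l)).
Proof.
  intros HD x. rewrite L0_jet_csum, <- csum_scal. apply csum_ext. intros j Hj.
  rewrite (L0_jet_scal r a (c j) (fun k y => D j k (y + l))), L0_jet_translate, HD by exact Hj.
  ring.
Qed.

Section JordanElimination.

(* [P] is stable under [T - c], where [T] is the direct sum of the Jordan blocks
   [[lambda i, 1], [0, lambda i]] acting on the pairs [(p i, q i)]. *)
Variables (n : nat) (lambda : nat -> C) (P : (nat -> C) -> (nat -> C) -> Prop).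
Hypothesis lambda_inj :
  forall i i', (i < n)%nat -> (i' < n)%nat -> lambda i = lambda i' -> i = i'.
Hypothesis P_shift : forall c p q,
  P p q -> P (fun i => (lambda i - c) * p i + q i) (fun i => (lambda i - c) * q i).
Variables (i0 : nat) (p0 q0 : nat -> C).
Hypotheses (i0_lt : (i0 < n)%nat) (P0 : P p0 q0) (q0_i0 : q0 i0 <> 0).

(* [(T - lambda m)^2] kills the block [m] and is invertible on the block [i0]. *)
Lemma P_vanish_below m : (m <= n)%nat ->
  exists p q, P p q /\ q i0 <> 0 /\
    forall i, (i < m)%nat -> i <> i0 -> p i = 0 /\ q i = 0.
Proof.
  induction m as [|m IH]; intros Hm.
  - exists p0, q0. split; [exact P0|]. split; [exact q0_i0|]. intros; lia.
  - destruct IH as [p [q [HP [Hq Hz]]]]; [lia|].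
    destruct (Nat.eq_dec m i0) as [->|Hne].
    + exists p, q. split; [exact HP|]. split; [exact Hq|].
      intros i Hi Hi0. apply Hz; lia.
    + pose proof (P_shift (lambda m) _ _ (P_shift (lambda m) p q HP)) as HP2.
      eexists; eexists. split; [exact HP2|]. cbv beta. split.
      * assert (Hl : lambda i0 - lambda m <> 0).
        { apply Cminus_eq_contra. intros E. apply Hne, lambda_inj; auto; lia. }
        repeat apply Cmult_neq_0; auto.
      * intros i Hi Hi0. destruct (Nat.eq_dec i m) as [->|Him].
        -- replace (lambda m - lambda m) with (RtoC 0) by ring. split; ring.
        -- destruct (Hz i) as [-> ->]; [lia | exact Hi0 |]. split; ring.
Qed.

Lemma P_isolate :
  exists p q, P p q /\ p i0 <> 0 /\
    forall i, (i < n)%nat -> q i = 0 /\ (i <> i0 -> p i = 0).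
Proof.
  destruct (P_vanish_below n (le_n n)) as [p [q [HP [Hq Hz]]]].
  pose proof (P_shift (lambda i0) p q HP) as HP1.
  eexists; eexists. split; [exact HP1|]. cbv beta.
  replace (lambda i0 - lambda i0) with (RtoC 0) by ring. split.
  { replace (0 * p i0 + q i0) with (q i0) by ring. exact Hq. }
  intros i Hi. destruct (Nat.eq_dec i i0) as [->|Hne].
  - replace (lambda i0 - lambda i0) with (RtoC 0) by ring. split; [ring | tauto].
  - destruct (Hz i Hi Hne) as [-> ->]. split; [ring | intros; ring].
Qed.

End JordanElimination.

Section RelationsAmongEigenfunctions.

Variables (r : nat) (a : nat -> C) (n : nat) (lambda : nat -> C) (E : nat -> nat -> C -> C).
Hypothesis r_pos : (0 < r)%nat.
Hypothesis E_jet : forall i, (i < n)%nat -> is_jet (S r) (E i).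
Hypothesis E_eigen : forall i x, (i < n)%nat -> L0_jet r a (E i) x = lambda i * E i 0%nat x.

(* On [span (E i 0, E i 1)], [L0] acts as the Jordan block of [lambda i]. *)
Lemma L0_jet_deriv_eigen i x : (i < n)%nat ->
  L0_jet r a (fun k => E i (S k)) x = lambda i * E i 1%nat x + E i 0%nat x.
Proof.
  intros Hi.
  assert (Hd : cderiv (L0_jet r a (E i)) (fun y => lambda i * E i 1%nat y)).
  { refine (cderiv_ext _ _ _ _ (fun y => eq_sym (E_eigen i y Hi)) (fun _ => eq_refl) _).
    apply cderiv_scal, E_jet; [exact Hi | lia]. }
  rewrite <- (cderiv_unique _ _ _ (cderiv_L0_jet r a (E i) r_pos (E_jet i Hi)) Hd x). ring.
Qed.

Definition lin_rel (p q : nat -> C) : Prop :=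
  forall x, csum n (fun i => p i * E i 0%nat x + q i * E i 1%nat x) = 0.

Lemma lin_rel_L0 p q : lin_rel p q ->
  lin_rel (fun i => lambda i * p i + q i) (fun i => lambda i * q i).
Proof.
  intros Hpq x.
  set (G k y := csum n (fun i => p i * E i k y + q i * E i (S k) y)).
  assert (HG : forall k, (k <= r)%nat -> forall y, G k y = 0).
  { apply jet_eq0; [|exact Hpq].
    intros k Hk. apply (cderiv_csum n (fun i y => p i * E i k y + q i * E i (S k) y)).
    intros i Hi. apply cderiv_plus; apply cderiv_scal, E_jet; auto; lia. }
  transitivity (L0_jet r a G x).
  - unfold G. rewrite L0_jet_csum. apply csum_ext. intros i Hi.
    rewrite (L0_jet_add r a (fun k y => p i * E i k y) (fun k y => q i * E i (S k) y)).
    rewrite (L0_jet_scal r a (p i) (E i)), (L0_jet_scal r a (q i) (fun k => E i (S k))).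
    rewrite E_eigen, L0_jet_deriv_eigen by exact Hi. ring.
  - unfold L0_jet. rewrite !HG by lia.
    rewrite csum_eq0; [ring|]. intros k Hk. rewrite HG by lia. ring.
Qed.

Lemma lin_rel_shift c p q : lin_rel p q ->
  lin_rel (fun i => (lambda i - c) * p i + q i) (fun i => (lambda i - c) * q i).
Proof.
  intros Hpq x.
  rewrite (csum_ext n _ (fun i => ((lambda i * p i + q i) * E i 0%nat x
                                   + lambda i * q i * E i 1%nat x)
                                  - c * (p i * E i 0%nat x + q i * E i 1%nat x)))
    by (intros; ring).
  rewrite csum_sub, csum_scal, (lin_rel_L0 p q Hpq x), Hpq. ring.
Qed.

Hypothesis lambda_inj :
  forall i i', (i < n)%nat -> (i' < n)%nat -> lambda i = lambda i' -> i = i'.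

Lemma lin_rel_eigen_eq0 p q i0 : (i0 < n)%nat -> lin_rel p q -> q i0 <> 0 ->
  forall x, E i0 0%nat x = 0.
Proof.
  intros Hi0 Hpq Hq x.
  destruct (P_isolate n lambda lin_rel lambda_inj lin_rel_shift i0 p q Hi0 Hpq Hq)
    as [p' [q' [Hrel [Hp' Hz]]]].
  specialize (Hrel x).
  rewrite (csum_single n i0) in Hrel; [|exact Hi0|].
  - rewrite (proj1 (Hz i0 Hi0)), Cmult_0_l, Cplus_0_r in Hrel.
    replace (E i0 0%nat x) with (/ p' i0 * (p' i0 * E i0 0%nat x)) by (field; exact Hp').
    rewrite Hrel. ring.
  - intros i Hi Hne. destruct (Hz i Hi) as [-> Hp0]. rewrite (Hp0 Hne). ring.
Qed.

End RelationsAmongEigenfunctions.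

Theorem mainTheorem4
  (r : nat) (a : nat -> C) (f df : nat -> C -> C)
  (n : nat) (lambda gamma : nat -> C) :
  (1 < r)%nat ->
  is_basis_ker_L0 r a f ->
  (forall j, (j < r)%nat -> cderiv (f j) (df j)) ->
  (1 <= n)%nat ->
  (forall i i', (i < n)%nat -> (i' < n)%nat -> lambda i = lambda i' -> i = i') ->
  forall mu : nat -> nat -> C,
    (forall x : C,
        csum n (fun i => csum r (fun j =>
          mu i j * apply_c (lambda i) (gamma i) (f j) (df j) x)) = 0) ->
    forall i j, (i < n)%nat -> (j < r)%nat -> mu i j = 0.
Proof.
  intros Hr [Hker [Hind _]] Hdf _ Hinj mu Hsum i0 j0 Hi0 Hj0.
  assert (Hr0 : (0 < r)%nat) by lia.
  destruct (ker_L0_jet_family r a f Hr0 Hker) as [D HD].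
  set (E i k x := csum r (fun j => mu i j * D j k (x + lambda i))).
  assert (HdfD : forall j x, (j < r)%nat -> df j x = D j 1%nat x).
  { intros j x Hj. destruct (HD j Hj) as [HD0 [HDjet _]].
    apply (cderiv_unique (f j)); [exact (Hdf j Hj)|].
    rewrite <- HD0. apply HDjet. lia. }
  assert (Hrel : lin_rel n E gamma (fun _ => 1)).
  { intros x. rewrite <- (Hsum x). apply csum_ext. intros i Hi. unfold E.
    rewrite <- !csum_scal, <- csum_add. apply csum_ext. intros j Hj.
    unfold apply_c. rewrite HdfD, (proj1 (HD j Hj)) by exact Hj. ring. }
  assert (HE0 : forall x, E i0 0%nat x = 0).
  { apply (lin_rel_eigen_eq0 r a n lambda E Hr0) with gamma (fun _ => 1);
      [| |exact Hinj|exact Hi0|exact Hrel|exact C1_nz].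
    - intros i Hi. apply is_jet_translate_comb. intros j Hj. apply (HD j Hj).
    - intros i x Hi. apply L0_jet_translate_comb. intros j Hj. apply (HD j Hj). }
  apply (Hind (mu i0)); [|exact Hj0].
  intros y. rewrite <- (HE0 (y - lambda i0)). apply csum_ext. intros j Hj.
  rewrite (proj1 (HD j Hj)). f_equal. f_equal. ring.
Qed.
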